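(* Let $\bm{C}\in\mathbb{R}^{n\times m}$ have i.i.d. entries $\bm{C}_{ij}\sim\mathrm{Unif}(0,1)$ (so that $\mathbb{P}(\mathrm{rk}(\bm{C})<\min\{n,m\})=0$), and let $\bm{a}\in\Delta_n$, $\bm{b}\in\Delta_m$ have strictly positive entries. Then, with probability one, the entrywise exponentials $\exp\{\bm{C}\}$ and $\exp\{-\bm{C}\}$ have full rank $\min\{n,m\}$, and the output $\mathrm{diag}(\bm{u})\,e^{-\bm{C}}\,\mathrm{diag}(\bm{v})$ of the Sinkhorn algorithm $\textit{Sinkhorn}(e^{-\bm{C}},\bm{a},\bm{b})$ has full rank $\min\{n,m\}$.
   Context: The Sinkhorn algorithm with kernel $\bm{K}\in\mathbb{R}_{>0}^{n\times m}$ and marginals $\bm{a},\bm{b}$ starts from $\bm{u}=\bm{1}_n$, $\bm{v}=\bm{1}_m$ and alternates the updates $\bm{u}\gets\bm{a}/(\bm{K}\bm{v})$, $\bm{v}\gets\bm{b}/(\bm{K}^{\mathrm T}\bm{u})$ (entrywise division), returning $\mathrm{diag}(\bm{u})\bm{K}\mathrm{diag}(\bm{v})$. $\Delta_d$ denotes the probability simplex in $\mathbb{R}^d$. *)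

From HB Require Import structures.
From mathcomp Require Import all_boot all_order all_algebra.
From mathcomp Require Import all_classical all_reals all_analysis.
Set Implicit Arguments. Unset Strict Implicit. Unset Printing Implicit Defensive.
Import Order.TTheory GRing.Theory Num.Theory.
Local Open Scope classical_set_scope.
Local Open Scope ring_scope.

Definition in_simplex (R : realType) (d : nat) (a : 'I_d -> R) : Prop :=
  (forall i, 0 <= a i) /\ \sum_(i < d) a i = 1.

Definition sinkhorn_step (R : realType) (n m : nat) (K : 'M[R]_(n, m))
  (a : 'I_n -> R) (b : 'I_m -> R) (uv : ('I_n -> R) * ('I_m -> R)) :
  ('I_n -> R) * ('I_m -> R) :=
  let u' := fun i => a i / \sum_(j < m) K i j * uv.2 j in
  let v' := fun j => b j / \sum_(i < n) K i j * u' i in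
  (u', v').

Definition sinkhorn_scalings (R : realType) (n m : nat) (K : 'M[R]_(n, m))
  (a : 'I_n -> R) (b : 'I_m -> R) (N : nat) : ('I_n -> R) * ('I_m -> R) :=
  iter N (sinkhorn_step K a b) (fun _ => 1, fun _ => 1).

Definition sinkhorn (R : realType) (n m : nat) (K : 'M[R]_(n, m))
  (a : 'I_n -> R) (b : 'I_m -> R) (N : nat) : 'M[R]_(n, m) :=
  let uv := sinkhorn_scalings K a b N in
  diag_mx (\row_i uv.1 i) *m K *m diag_mx (\row_j uv.2 j).

Definition mx_exp (R : realType) (n m : nat) (A : 'M[R]_(n, m)) : 'M[R]_(n, m) :=
  map_mx (@expR R) A.

(* mutual independence of a finite family of real random variables:
   product rule for every family of Borel sets (taking B = setT for unused
   indices gives the product rule for every subfamily). *)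
Definition mutually_independent (d : measure_display) (T : measurableType d)
  (R : realType) (P : probability T R) (I : finType) (X : I -> {RV P >-> R}) : Prop :=
  forall B : I -> set R, (forall i, measurable (B i)) ->
    P [set w | forall i, B i (X i w)] = (\prod_(i : I) fine (P (X i @^-1` B i)))%:E.

Definition uniform01 (d : measure_display) (T : measurableType d)
  (R : realType) (P : probability T R) (X : {RV P >-> R}) : Prop :=
  forall A : set R, measurable A ->
    distribution P X A = uniform_prob (@ltr01 R) A.

(* Let M_k be the leading k x k minor of exp(s C), s = 1 or s = -1.  Expanding
   det M_(k+1) along its last diagonal entry gives
     det M_(k+1) = det B + exp(s C_kk) det M_k,
   where B (M_(k+1) with that entry replaced by 0) and M_k only involve the
   other entries of C.  So if det M_k <> 0 and det M_(k+1) = 0, then C_kk is a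
   measurable function of the other entries; since C_kk is uniform and
   independent of them (pi-lambda theorem), this has probability zero.  By
   induction the leading min(n, m) minor is almost surely nonzero, hence
   exp(C) and exp(-C) have full rank.  The Sinkhorn output is exp(-C) scaled
   on both sides by positive diagonal matrices, so it has the same rank. *)

From HB Require Import structures.
From mathcomp Require Import all_boot all_order all_algebra.
From mathcomp Require Import all_classical all_reals all_analysis.
From mathcomp Require Import ring lra measurable_realfun.
Import Order.TTheory GRing.Theory Num.Theory.
Set Implicit Arguments. Unset Strict Implicit. Unset Printing Implicit Defensive.
Local Open Scope classical_set_scope.
Local Open Scope ring_scope.

Section Cofactors.
Variable R : comPzRingType.

Lemma cofactor_diag n (A : 'M[R]_n) i : cofactor A i i = \det (row' i (col' i A)).
Proof. by rewrite /cofactor -signr_odd addnn odd_double expr0 mul1r. Qed.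

Lemma det_update_entry n (A B : 'M[R]_n) i0 j0 :
  (forall i j, (i, j) != (i0, j0) -> A i j = B i j) ->
  \det A = \det B + (A i0 j0 - B i0 j0) * cofactor A i0 j0.
Proof.
move=> eqAB.
have cofE j : cofactor A i0 j = cofactor B i0 j.
  rewrite /cofactor; congr (_ * \det _); apply/matrixP => i j'; rewrite !mxE.
  by apply: eqAB; rewrite xpair_eqE eq_sym (negbTE (neq_lift _ _)).
have sumE : \sum_(j | j != j0) A i0 j * cofactor A i0 j =
            \sum_(j | j != j0) B i0 j * cofactor B i0 j.
  by apply: eq_bigr => j j0j; rewrite cofE eqAB; last by rewrite xpair_eqE eqxx.
rewrite (expand_det_row A i0) (expand_det_row B i0).
rewrite (bigD1 j0) // [X in _ = X + _](bigD1 j0) //= sumE cofE.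
ring.
Qed.

Definition cut_corner k (A : 'M[R]_k.+1) : 'M[R]_k.+1 :=
  \matrix_(i, j) if (i, j) == (ord_max, ord_max) then 0 else A i j.

Lemma det_cut_corner k (A : 'M[R]_k.+1) :
  \det A =
  \det (cut_corner A) + A ord_max ord_max * \det (row' ord_max (col' ord_max A)).
Proof.
rewrite (@det_update_entry _ _ (cut_corner A) ord_max ord_max) => [|i j ij].
  by rewrite mxE eqxx subr0 cofactor_diag.
by rewrite mxE ifN.
Qed.

End Cofactors.

Definition lead_submx (T : Type) m n k (hm : (k <= m)%N) (hn : (k <= n)%N)
  (A : 'M[T]_(m, n)) : 'M[T]_k :=
  mxsub (widen_ord hm) (widen_ord hn) A.

Lemma lead_submx_minor (T : Type) m n k (hm : (k < m)%N) (hn : (k < n)%N)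
  (A : 'M[T]_(m, n)) :
  row' ord_max (col' ord_max (lead_submx hm hn A)) = lead_submx (ltnW hm) (ltnW hn) A.
Proof.
by apply/matrixP => i j; rewrite !mxE; congr (A _ _); apply: val_inj; exact: lift_max.
Qed.

Section FieldMatrices.
Variable R : fieldType.

Lemma mxrank_mxsub m n p q (f : 'I_p -> 'I_m) (g : 'I_q -> 'I_n) (A : 'M[R]_(m, n)) :
  (\rank (mxsub f g A) <= \rank A)%N.
Proof.
rewrite mxsubrc (leq_trans (mxrankS (rowsub_sub _ _))) //.
by rewrite -[X in colsub g X]mulmx1 -mulmx_colsub mxrankM_maxl.
Qed.

Lemma mxrank_eq_minn_lead_submx m n (A : 'M[R]_(m, n)) :
  \det (lead_submx (geq_minl m n) (geq_minr m n) A) != 0 -> \rank A = minn m n.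
Proof.
move=> det_neq0; apply/eqP; rewrite eqn_leq leq_min rank_leq_row rank_leq_col /=.
have lead_unit : lead_submx (geq_minl m n) (geq_minr m n) A \in unitmx.
  by rewrite unitmxE unitfE.
by rewrite -{1}(mxrank_unit lead_unit) mxrank_mxsub.
Qed.

Lemma unitmx_diag n (d : 'rV[R]_n) : (forall i, d 0 i != 0) -> diag_mx d \in unitmx.
Proof. by move=> d0; rewrite unitmxE det_diag unitfE; apply/prodf_neq0 => i _. Qed.

Lemma mxrank_diag_scale m n (u : 'rV[R]_m) (v : 'rV[R]_n) (K : 'M[R]_(m, n)) :
  (forall i, u 0 i != 0) -> (forall j, v 0 j != 0) ->
  \rank (diag_mx u *m K *m diag_mx v) = \rank K.
Proof.
move=> u0 v0; rewrite mxrankMfree ?row_free_unit ?unitmx_diag //.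
by rewrite eqmxMfull ?row_full_unit ?unitmx_diag.
Qed.

End FieldMatrices.

Lemma sumr_gt0 (R : numDomainType) (I : finType) (i0 : I) (F : I -> R) :
  (forall i, 0 < F i) -> 0 < \sum_i F i.
Proof.
move=> F_gt0; rewrite (bigD1 i0) //= ltr_wpDr ?F_gt0 //.
by apply: sumr_ge0 => i _; exact: ltW.
Qed.

Lemma sinkhorn_scalings_gt0 (R : realType) n m (K : 'M[R]_(n.+1, m.+1)) a b N :
  (forall i j, 0 < K i j) -> (forall i, 0 < a i) -> (forall j, 0 < b j) ->
  (forall i, 0 < (sinkhorn_scalings K a b N).1 i) /\
  (forall j, 0 < (sinkhorn_scalings K a b N).2 j).
Proof.
move=> K_gt0 a_gt0 b_gt0; elim: N => [|N [_ v_gt0]] /=; first by split => ? /=.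
have u_gt0 i : 0 < a i / \sum_j K i j * (sinkhorn_scalings K a b N).2 j.
  by rewrite divr_gt0 // (sumr_gt0 ord0) // => j; rewrite mulr_gt0.
by split => // j; rewrite divr_gt0 // (sumr_gt0 ord0) // => i; rewrite mulr_gt0.
Qed.

Lemma mxrank_sinkhorn (R : realType) n m (K : 'M[R]_(n, m)) a b N :
  (forall i j, 0 < K i j) -> (forall i, 0 < a i) -> (forall j, 0 < b j) ->
  \rank (sinkhorn K a b N) = \rank K.
Proof.
case: n K a => [|n] K a; first by rewrite (flatmx0 (sinkhorn K a b N)) (flatmx0 K).
case: m K b => [|m] K b; first by rewrite (thinmx0 (sinkhorn K a b N)) (thinmx0 K).
move=> K_gt0 a_gt0 b_gt0.
have [u_gt0 v_gt0] := sinkhorn_scalings_gt0 N K_gt0 a_gt0 b_gt0.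
by rewrite mxrank_diag_scale // => [i|j]; rewrite mxE lt0r_neq0.
Qed.

Lemma measurable_det d (T : measurableType d) (R : realType) k (F : T -> 'M[R]_k) :
  (forall i j, measurable_fun setT (fun w => F w i j)) ->
  measurable_fun setT (fun w => \det (F w)).
Proof.
move=> mF; apply: measurable_sum => s; apply: measurable_funM => //.
by apply: measurable_prod => i _; exact: mF.
Qed.

Section IndependentEvents.
Context d (T : measurableType d) (R : realType) (P : probability T R).

Definition indep_events (E S : set T) := P (E `&` S) = (P E * P S)%E.

Let probabilityE (S : set T) : measurable S -> P S = (fine (P S))%:E.
Proof. by move=> mS; rewrite fineK // fin_num_measure. Qed.

Lemma indep_eventsC E S : measurable E -> measurable S ->
  indep_events E S -> indep_events E (~` S).
Proof.
move=> mE mS ES.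
have PEC : P (E `&` ~` S) = (P E - P (E `&` S))%E.
  rewrite -setDE measureD //.
  by rewrite (le_lt_trans (probability_le1 _ mE)) ?ltry.
rewrite /indep_events PEC probability_setC // ES (probabilityE mE) (probabilityE mS).
by rewrite -EFinM -!EFinB -EFinM; congr EFin; ring.
Qed.

Lemma indep_events_bigcup E (F : (set T)^nat) : measurable E ->
  (forall k, measurable (F k)) -> trivIset setT F ->
  (forall k, indep_events E (F k)) -> indep_events E (\bigcup_k F k).
Proof.
move=> mE mF tF EF.
have PEF : P (E `&` \bigcup_k F k) = (\sum_(k <oo) P (E `&` F k))%E.
  rewrite setI_bigcupr; apply: measure_semi_bigcup.
  - by move=> k; apply: measurableI.
  - exact: trivIset_setIl.
  - by apply: bigcupT_measurable => k; apply: measurableI.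
have PF : P (\bigcup_k F k) = (\sum_(k <oo) P (F k))%E.
  by apply: measure_semi_bigcup => //; apply: bigcupT_measurable.
rewrite /indep_events PEF PF (eq_eseriesr (fun k _ => EF k)).
by rewrite (probabilityE mE) nneseriesZl.
Qed.

Lemma indep_events_sigma (G : set (set T)) E : measurable E ->
  setI_closed G -> G `<=` measurable -> (forall S, G S -> indep_events E S) ->
  forall S, <<s G >> S -> indep_events E S.
Proof.
move=> mE GI Gm GE.
suff indepG : forall S, <<s G >> S -> @measurable _ T S /\ indep_events E S.
  by move=> S /indepG[].
apply: (@dynkin_induction _ (g_sigma_algebraType G) G
  (fun S => @measurable _ T S /\ indep_events E S) erefl) => //.
- by split => //; rewrite /indep_events setIT probability_setT mule1.
- by move=> S GS; split; [exact: Gm | exact: GE].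
- by move=> S _ [mS ES]; split; [exact: measurableC | exact: indep_eventsC].
- move=> F _ tF EF; split; first by apply: bigcupT_measurable => k; case: (EF k).
  by apply: indep_events_bigcup => // k; case: (EF k).
Qed.

End IndependentEvents.

Section UniformCoincidence.
Context d (T : measurableType d) (R : realType) (P : probability T R).

Lemma uniform_prob_le_lebesgue (U : set R) : measurable U ->
  (uniform_prob (@ltr01 R) U <= lebesgue_measure U)%E.
Proof.
move=> mU; rewrite -[X in (_ <= X)%E]mul1e -integral_cst //.
apply: ge0_le_integral => //.
- by move=> x _; rewrite lee_fin uniform_pdf_ge0.
- by apply/measurable_EFinP/measurable_funTS; exact: measurable_uniform_pdf.
- by move=> x _; rewrite lee_fin /uniform_pdf subr0 invr1; case: ifPn.
Qed.

Lemma uniform_prob_itvNy0 : uniform_prob (@ltr01 R) `]-oo, 0[ = 0%E.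
Proof.
rewrite /uniform_prob integral_uniform_pdf (_ : _ `&` _ = set0) ?integral_set0 //.
by apply/seteqP; split => x //= []; rewrite !in_itv /=; lra.
Qed.

Definition grid_itv (e : R) (k : nat) : set R := `[k%:R * e, k.+1%:R * e[.

Lemma grid_itv_trivIset e : 0 < e -> trivIset setT (grid_itv e).
Proof.
move=> e0; have le_index i j y : i%:R * e <= y -> y < j.+1%:R * e -> (i <= j)%N.
  by move=> iy yj; rewrite -ltnS -(ltr_nat R) -(ltr_pM2r e0) (le_lt_trans iy yj).
move=> i j _ _ [y []]; rewrite /grid_itv /= !in_itv /=.
move=> /andP[iy yi] /andP[jy yj].
by apply/eqP; rewrite eqn_leq (le_index _ _ _ iy yj) (le_index _ _ _ jy yi).
Qed.

Lemma lebesgue_grid_itv e k : 0 < e -> lebesgue_measure (grid_itv e k) = e%:E.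
Proof.
move=> e0; rewrite lebesgue_measure_itv /= lte_fin ltr_pM2r // ltr_nat ltnSn.
by rewrite -EFinB -addn1 natrD; congr EFin; ring.
Qed.

Lemma grid_itv_cover e y : 0 < e -> 0 <= y -> exists k, grid_itv e k y.
Proof.
move=> e0 y0; exists (Num.truncn (y / e)); rewrite /grid_itv /= in_itv /=.
by rewrite -ler_pdivlMr // -ltr_pdivrMr // truncn_itv // divr_ge0 // ltW.
Qed.

Variables (X : {RV P >-> R}) (V : T -> R).
Hypotheses (X_unif : uniform01 X) (mV : measurable_fun setT V).
Hypothesis XV_indep : forall A B, measurable A -> measurable B ->
  indep_events P (X @^-1` A) (V @^-1` B).

Let PX (A : set R) : measurable A -> P (X @^-1` A) = uniform_prob (@ltr01 R) A.
Proof. exact: X_unif. Qed.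

Let measurable_coincidence : measurable [set w | X w = V w].
Proof.
rewrite (_ : [set w | _] = (fun w => X w - V w) @^-1` [set 0]).
  by rewrite -[_ @^-1` _]setTI; apply: measurable_funB.
by apply/seteqP; split => w /= => [->|/eqP]; rewrite ?subrr // subr_eq0 => /eqP.
Qed.

Let measurable_Vgrid e k : measurable (V @^-1` grid_itv e k).
Proof. by rewrite -[_ @^-1` _]setTI; apply: mV => //; exact: measurable_itv. Qed.

Let cell e k := X @^-1` grid_itv e k `&` V @^-1` grid_itv e k.

Let measurable_cell e k : measurable (cell e k).
Proof. by apply: measurableI => //; apply: measurable_funPTI; exact: measurable_itv. Qed.

Let coincidence_sub_cells e : 0 < e ->
  [set w | X w = V w] `<=` X @^-1` `]-oo, 0[ `|` \bigcup_k cell e k.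
Proof.
move=> e0 w /= XVw; have [Xw_lt0|Xw_ge0] := ltP (X w) 0.
  by left; rewrite /= in_itv.
by right; have [k Gk] := grid_itv_cover e0 Xw_ge0; exists k; split; rewrite //= -XVw.
Qed.

(* Independence bounds each cell by [e * P (V \in grid_itv e k)], and the
   events [V \in grid_itv e k] are disjoint. *)
Let cells_le e : 0 < e -> (P (\bigcup_k cell e k) <= e%:E)%E.
Proof.
move=> e0.
have Pcell k : (P (cell e k) <= e%:E * P (V @^-1` grid_itv e k))%E.
  rewrite /cell XV_indep ?PX ?lee_wpmul2r //; try exact: measurable_itv.
  rewrite -(lebesgue_grid_itv k e0) uniform_prob_le_lebesgue //.
  exact: measurable_itv.
have tVG : trivIset setT (fun k => V @^-1` grid_itv e k).
  by move=> i j _ _ [w Gw]; apply: (grid_itv_trivIset e0) => //; exists (V w).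
have Pcells : P (\bigcup_k cell e k) = (\sum_(k <oo) P (cell e k))%E.
  apply: measure_semi_bigcup => //; first exact: trivIset_setIl.
  exact: bigcupT_measurable.
have PVG : P (\bigcup_k V @^-1` grid_itv e k) =
            (\sum_(k <oo) P (V @^-1` grid_itv e k))%E.
  by apply: measure_semi_bigcup => //; exact: bigcupT_measurable.
rewrite Pcells.
apply: (@le_trans _ _ (\sum_(k <oo) (e%:E * P (V @^-1` grid_itv e k)))%E).
  by apply: lee_nneseries => k _ //; exact: measure_ge0.
rewrite nneseriesZl // -PVG -[X in (_ <= X)%E]mule1 lee_wpmul2l ?lee_fin ?(ltW e0) //.
by apply: probability_le1; exact: bigcupT_measurable.
Qed.

Lemma indep_uniform_eq_le e : 0 < e -> (P [set w | X w = V w] <= e%:E)%E.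
Proof.
move=> e0; pose N := X @^-1` `]-oo, 0[.
have mN : measurable N by apply: measurable_funPTI; exact: measurable_itv.
have PN : P N = 0%E by rewrite PX ?uniform_prob_itvNy0 //; exact: measurable_itv.
have mcells : measurable (\bigcup_k cell e k) by exact: bigcupT_measurable.
have PE : (P [set w | X w = V w] <= P (N `|` \bigcup_k cell e k))%E.
  apply: le_measure; rewrite ?inE //; last exact: coincidence_sub_cells.
  exact: measurableU.
have PNcells : (P (N `|` \bigcup_k cell e k) <= P N + P (\bigcup_k cell e k))%E.
  exact: measureU2.
by rewrite (le_trans PE) // (le_trans PNcells) // PN add0e cells_le.
Qed.

Lemma indep_uniform_eq_negligible : P.-negligible [set w | X w = V w].
Proof.
apply/negligibleP => //; apply/eqP; rewrite eq_le measure_ge0 andbT.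
by apply/lee_addgt0Pr => e e0; rewrite add0e indep_uniform_eq_le.
Qed.

End UniformCoincidence.

Section OtherCoordinates.
Context d (T : measurableType d) (R : realType) (P : probability T R)
  (I : finType) (X : I -> {RV P >-> R}).

(* Cylinder sets leaving coordinate [i0] free; they generate the sigma-algebra
   of the other coordinates. *)
Definition coord_rects (i0 : I) : set (set T) :=
  [set S | exists B : I -> set R, [/\ forall i, measurable (B i), B i0 = setT &
                                      S = [set w | forall i, B i (X i w)]]].

Lemma measurable_coord_rect (B : I -> set R) : (forall i, measurable (B i)) ->
  measurable [set w | forall i, B i (X i w)].
Proof.
move=> mB; rewrite (_ : [set w | _] = \bigcap_(i in setT) (X i @^-1` B i)).
  apply: fin_bigcap_measurable => [|i _]; first exact: finite_finset.
  exact: measurable_funPTI.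
by apply/seteqP; split => [w Bw i _ | w Bw i]; apply: Bw.
Qed.

Lemma coord_rects_measurable i0 : coord_rects i0 `<=` measurable.
Proof. by move=> _ [B [mB _ ->]]; exact: measurable_coord_rect. Qed.

Lemma coord_rects_setI_closed i0 : setI_closed (coord_rects i0).
Proof.
move=> _ _ [B1 [mB1 B1i0 ->]] [B2 [mB2 B2i0 ->]].
exists (fun i => B1 i `&` B2 i); split => [i||]; first exact: measurableI.
  by rewrite B1i0 B2i0 setTI.
apply/seteqP; split => w /= => [[B1w B2w] i | Bw]; first by split.
by split => i; case: (Bw i).
Qed.

Lemma measurable_coord_others i0 i : i != i0 ->
  measurable_fun (T := g_sigma_algebraType (coord_rects i0)) setT (X i).
Proof.
move=> ii0 _ A mA; rewrite setTI; apply: sub_sigma_algebra.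
exists (fun j => if j == i then A else setT); split => [j||].
- by case: ifP.
- by rewrite eq_sym (negbTE ii0).
- by apply/seteqP; split => w /= => [Aw j | /(_ i)]; [case: eqP => // ->| rewrite eqxx].
Qed.

Hypothesis X_indep : mutually_independent X.

Lemma indep_coord_others i0 (A : set R) (S : set T) : measurable A ->
  <<s coord_rects i0 >> S -> indep_events P (X i0 @^-1` A) S.
Proof.
move=> mA; apply: indep_events_sigma.
- exact: measurable_funPTI.
- exact: coord_rects_setI_closed.
- exact: coord_rects_measurable.
move=> _ [B [mB Bi0 ->]].
pose BA i := if i == i0 then A else B i.
have mBA i : measurable (BA i) by rewrite /BA; case: ifP.
rewrite /indep_events (_ : _ `&` _ = [set w | forall i, BA i (X i w)]); last first.
  apply/seteqP; split => w /= => [[Aw Bw] i | BAw].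
    by rewrite /BA; case: eqP => [->|_]; [exact: Aw | exact: Bw].
  split=> [|i]; first by have := BAw i0; rewrite /BA eqxx.
  by have := BAw i; rewrite /BA; case: eqP => [->|]; rewrite ?Bi0.
rewrite !X_indep // (bigD1 i0) // [X in (_ * X%:E)%E](bigD1 i0) //=.
rewrite /BA eqxx Bi0 preimage_setT probability_setT /= mul1r EFinM fineK.
  by congr (_ * _%:E)%E; apply: eq_bigr => i /negbTE ->.
exact/fin_num_measure/measurable_funPTI.
Qed.

Lemma uniform_coord_eq_others_negligible i0 (V : T -> R) : uniform01 (X i0) ->
  measurable_fun (T := g_sigma_algebraType (coord_rects i0)) setT V ->
  P.-negligible [set w | X i0 w = V w].
Proof.
move=> X_unif mV.
have others_measurable B : measurable B -> <<s coord_rects i0 >> (V @^-1` B).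
  by move=> mB; have := mV measurableT B mB; rewrite setTI.
apply: indep_uniform_eq_negligible => // [_ B mB | A B mA mB]; last first.
  by apply: indep_coord_others => //; exact: others_measurable.
rewrite setTI; apply: (smallest_sub (@sigma_algebra_measurable _ T));
  [exact: coord_rects_measurable | exact: others_measurable].
Qed.

End OtherCoordinates.

Section RandomExpMatrix.
Context d (T : measurableType d) (R : realType) (P : probability T R) (n m : nat)
  (C : 'I_n * 'I_m -> {RV P >-> R}).
Hypotheses (C_unif : forall ij, uniform01 (C ij)) (C_indep : mutually_independent C).
Variable s : R.
Hypothesis s_neq0 : s != 0.

Local Notation expC w := (mx_exp (s *: \matrix_(i, j) C (i, j) w)).
Local Notation others i0 := (g_sigma_algebraType (coord_rects C i0)).

Lemma measurable_lead_entry k (hn : (k < n)%N) (hm : (k < m)%N) i j :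
  (i, j) != (ord_max, ord_max) ->
  measurable_fun (T := others (Ordinal hn, Ordinal hm)) setT
    (fun w => lead_submx hn hm (expC w) i j).
Proof.
move=> ij; under eq_fun do rewrite !mxE.
apply: measurableT_comp (@measurable_expR R) _; apply: measurable_funM => //.
apply: measurable_coord_others; move: ij; apply: contra => /eqP[iE jE].
by rewrite xpair_eqE -!val_eqE /= iE jE !eqxx.
Qed.

Lemma measurable_det_cut_corner k (hn : (k < n)%N) (hm : (k < m)%N) :
  measurable_fun (T := others (Ordinal hn, Ordinal hm)) setT
    (fun w => \det (cut_corner (lead_submx hn hm (expC w)))).
Proof.
apply: measurable_det => i j; under eq_fun do rewrite mxE.
by case: eqP => [_ | /eqP ij]; [exact: measurable_cst | exact: measurable_lead_entry].
Qed.

Lemma measurable_det_lead_minor k (hn : (k < n)%N) (hm : (k < m)%N) :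
  measurable_fun (T := others (Ordinal hn, Ordinal hm)) setT
    (fun w => \det (lead_submx (ltnW hn) (ltnW hm) (expC w))).
Proof.
apply: measurable_det => i j; under eq_fun do rewrite -lead_submx_minor 2!mxE.
by apply: measurable_lead_entry; rewrite xpair_eqE eq_sym (negbTE (neq_lift _ _)).
Qed.

Lemma det_lead_submx_exp_negligible k (hn : (k <= n)%N) (hm : (k <= m)%N) :
  P.-negligible [set w | \det (lead_submx hn hm (expC w)) = 0].
Proof.
elim: k hn hm => [|k IH] hn hm.
  apply: negligibleS (negligible_set0 P) => w /=.
  by rewrite det_mx00 => /eqP; rewrite oner_eq0.
pose i0 : 'I_n * 'I_m := (Ordinal hn, Ordinal hm).
pose M w := lead_submx hn hm (expC w).
pose Mk w := lead_submx (ltnW hn) (ltnW hm) (expC w).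
have max_i0 : (widen_ord hn ord_max, widen_ord hm ord_max) = i0.
  by apply/eqP; rewrite xpair_eqE -!val_eqE /= !eqxx.
have corner w : M w ord_max ord_max = expR (s * C i0 w) by rewrite !mxE max_i0.
have detM w : \det (M w) = \det (cut_corner (M w)) + expR (s * C i0 w) * \det (Mk w).
  by rewrite [LHS]det_cut_corner corner /M lead_submx_minor.
(* Where [det (M w) = 0 <> det (Mk w)], [detM] determines [C i0 w] as [V w]. *)
pose V w := s^-1 * (ln `|\det (cut_corner (M w))| - ln `|\det (Mk w)|).
have mV : measurable_fun (T := others i0) setT V.
  apply: measurable_funM => //; apply: measurable_funB;
    apply: measurableT_comp (@measurable_ln R) _;
    apply: measurableT_comp (@normr_measurable R setT) _.
  - exact: measurable_det_cut_corner.
  - exact: measurable_det_lead_minor.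
apply: negligibleS (negligibleU (IH (ltnW hn) (ltnW hm))
  (uniform_coord_eq_others_negligible C_indep (C_unif i0) mV)).
move=> w /= detM0; have [|Mk_neq0] := eqVneq (\det (Mk w)) 0; [by left | right].
have normB : `|\det (cut_corner (M w))| = expR (s * C i0 w) * `|\det (Mk w)|.
  move/eqP: detM0; rewrite detM addr_eq0 => /eqP ->.
  by rewrite normrN normrM ger0_norm ?expR_ge0.
by rewrite /V normB lnM ?posrE ?expR_gt0 ?normr_gt0 // expRK addrK mulKf.
Qed.

Lemma mx_exp_full_rank_ae : {ae P, forall w, \rank (expC w) = minn n m}.
Proof.
apply: negligibleS (det_lead_submx_exp_negligible (geq_minl n m) (geq_minr n m)).
move=> w /= rank_neq; apply: contrapT => det_neq0; apply: rank_neq.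
by apply: mxrank_eq_minn_lead_submx; apply/eqP.
Qed.

End RandomExpMatrix.

Theorem proposition7 (d : measure_display) (T : measurableType d)
  (R : realType) (P : probability T R) (n m : nat)
  (C : 'I_n * 'I_m -> {RV P >-> R})
  (Cunif : forall ij, uniform01 (C ij))
  (Cindep : mutually_independent C)
  (a : 'I_n -> R) (b : 'I_m -> R)
  (ha : in_simplex a) (hb : in_simplex b)
  (ha0 : forall i, 0 < a i) (hb0 : forall j, 0 < b j) :
  {ae P, forall w : T,
    let Cw : 'M[R]_(n, m) := \matrix_(i, j) C (i, j) w in
    [/\ \rank (mx_exp Cw) = minn n m,
        \rank (mx_exp (- Cw)) = minn n m &
        forall N : nat, \rank (sinkhorn (mx_exp (- Cw)) a b N) = minn n m]}.
Proof.
have neg1_neq0 : -1 != 0 :> R by rewrite oppr_eq0 oner_eq0.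
apply: filterS2 (mx_exp_full_rank_ae Cunif Cindep (oner_neq0 R))
  (mx_exp_full_rank_ae Cunif Cindep neg1_neq0) => w.
rewrite scale1r scaleN1r => rank_exp rank_expN.
split => // N; rewrite mxrank_sinkhorn // => i j.
by rewrite mxE expR_gt0.
Qed.
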